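(* A binary relation (i.e. a structure $(X,\rho)$ with $\rho\subseteq X\times X$) is unary FA-presentable if and only if it is isomorphic to a binary relation obtained by propagating a unary FA-foundational binary relation.
   Context: A structure is unary FA-presentable if there exist a regular language $L\subseteq a^*$ over a one-letter alphabet and a surjection $\phi:L\to X$ such that, for each of the relations equality and $\rho$, the set of pairs $(u,v)\in L^2$ with $u\phi,v\phi$ related is a regular relation, i.e. $\{\mathrm{conv}(u,v)\}$ is a regular language, where $\mathrm{conv}(u,v)$ is the word over $\{a,\$\}^2$ reading $u,v$ in parallel with the shorter word padded by $\$$. A unary FA-foundational binary relation is a finite set $Q$ with a relation $\rho\subseteq Q\times Q$ and pairwise disjoint subsets $P_0,\dots,P_{n-1}$ ($n\ge 0$) called seeds, each $P_k=\{p^{(k)}_1,\dots,p^{(k)}_5\}$ with five distinct elements, such that, writing $Q'=Q\setminus(P_0\cup\dots\cup P_{n-1})$, for all $k,l\in\{0,\dots,n-1\}$ (possibly $k=l$) and all $q\in Q'$: (1) the statements $p^{(k)}_i\,\rho\,p^{(l)}_i$ for $i=1,\dots,5$ are all true or all false; (2) the statements $p^{(k)}_i\,\rho\,p^{(l)}_{i+1}$ for $i=1,\dots,4$ are all true or all false; (3) the statements $p^{(k)}_{i+1}\,\rho\,p^{(l)}_{i}$ for $i=1,\dots,4$ are all true or all false; (4) the statements $p^{(k)}_i\,\rho\,p^{(l)}_j$ for all $1\le i,j\le 5$ with $j-i\ge 2$ are all true or all false; (5) the statements $p^{(k)}_j\,\rho\,p^{(l)}_i$ for all $1\le i,j\le5$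 with $j-i\ge 2$ are all true or all false; (6) the statements $q\,\rho\,p^{(k)}_i$ for $i=2,\dots,5$ are all true or all false; (7) the statements $p^{(k)}_i\,\rho\,q$ for $i=2,\dots,5$ are all true or all false. Propagating it yields the structure $(\hat Q,\hat\rho)$ where $\hat Q=Q'\cup\{p^{(k)}_i: 0\le k\le n-1,\ i\in\mathbb{N}=\{1,2,\dots\}\}$ (new distinct elements $p^{(k)}_i$ for $i\ge 6$), and $\hat\rho$ is defined by: for $p,q\in Q'$, $p\,\hat\rho\, q$ iff $p\,\rho\, q$; for $i,j\in\mathbb{N}$, $p^{(k)}_i\,\hat\rho\,p^{(l)}_j$ iff [$j=i$ and $p^{(k)}_1\rho p^{(l)}_1$] or [$j=i+1$ and $p^{(k)}_1\rho p^{(l)}_2$] or [$j=i-1$ and $p^{(k)}_2\rho p^{(l)}_1$] or [$j\ge i+2$ and $p^{(k)}_1\rho p^{(l)}_3$] or [$j\le i-2$ and $p^{(k)}_3\rho p^{(l)}_1$]; for $q\in Q'$: $q\,\hat\rho\,p^{(k)}_1$ iff $q\rho p^{(k)}_1$, and for $i\ge2$, $q\,\hat\rho\,p^{(k)}_i$ iff $q\rho p^{(k)}_2$; $p^{(k)}_1\,\hat\rho\,q$ iff $p^{(k)}_1\rho q$, and for $i\ge 2$, $p^{(k)}_i\,\hat\rho\,q$ iff $p^{(k)}_2\rho q$. (Then $\hat\rho$ restricted to $Q$ equals $\rho$.) *)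

From mathcomp Require Import all_boot.
Set Implicit Arguments. Unset Strict Implicit. Unset Printing Implicit Defensive.

Record dfa (A : Type) := DFA {
  dstate : finType;
  dstart : dstate;
  dfinal : pred dstate;
  dtrans : dstate -> A -> dstate }.

Definition daccept (A : Type) (D : dfa A) (w : seq A) : bool :=
  @dfinal A D (foldl (@dtrans A D) (@dstart A D) w).

Definition regular_lang (A : Type) (K : seq A -> Prop) : Prop :=
  exists D : dfa A, forall w, daccept D w <-> K w.

(* Words over the one-letter alphabet {a} are a^m, encoded by m : nat
   (the word of length m over the alphabet unit). *)
Definition unary_regular (L : pred nat) : Prop :=
  regular_lang (fun w : seq unit => L (size w)).

(* Convolution conv(a^m, a^n) over {a,$}^2; letter true = a, false = $. *)
Definition conv (m n : nat) : seq (bool * bool) :=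
  mkseq (fun i => (i < m, i < n)) (maxn m n).

Definition unary_regular_rel (R : nat -> nat -> Prop) : Prop :=
  regular_lang (fun w => exists m n, w = conv m n /\ R m n).

Definition unary_FA_presentable (X : Type) (rho : X -> X -> Prop) : Prop :=
  exists (L : pred nat) (phi : {m : nat | L m} -> X),
    unary_regular L /\
    (forall x : X, exists u, phi u = x) /\
    unary_regular_rel (fun m n => exists (hm : L m) (hn : L n),
                          phi (exist _ m hm) = phi (exist _ n hn)) /\
    unary_regular_rel (fun m n => exists (hm : L m) (hn : L n),
                          rho (phi (exist _ m hm)) (phi (exist _ n hn))).

Definition rel_iso (X Y : Type) (rX : X -> X -> Prop) (rY : Y -> Y -> Prop) :=
  exists f : X -> Y, bijective f /\ forall x y, rX x y <-> rY (f x) (f y).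

(* Seeds: p k i is p^(k)_(i+1) for k < n and i : 'I_5 (0-based index i
   stands for the paper's index i+1). *)
Definition in_seed (Q : finType) (n : nat) (p : 'I_n -> 'I_5 -> Q) (q : Q) : bool :=
  [exists k, [exists i, p k i == q]].

Definition seed_const (Q : finType) (rho : rel Q) (n : nat)
    (p : 'I_n -> 'I_5 -> Q) (cnd : nat -> nat -> bool) : Prop :=
  forall (k l : 'I_n) (i j i' j' : 'I_5),
    cnd i j -> cnd i' j' -> rho (p k i) (p l j) = rho (p k i') (p l j').

Definition FA_foundational (Q : finType) (rho : rel Q) (n : nat)
    (p : 'I_n -> 'I_5 -> Q) : Prop :=
  (forall k l i j, p k i = p l j -> k = l /\ i = j) /\
  seed_const rho p (fun i j => j == i) /\
  seed_const rho p (fun i j => j == i.+1) /\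
  seed_const rho p (fun i j => i == j.+1) /\
  seed_const rho p (fun i j => i.+2 <= j) /\
  seed_const rho p (fun i j => j.+2 <= i) /\
  (* conditions (6),(7): indices 2..5 (0-based 1..4) *)
  (forall (k : 'I_n) (q : Q) (i i' : 'I_5), ~~ in_seed p q ->
      0 < i -> 0 < i' ->
      rho q (p k i) = rho q (p k i') /\ rho (p k i) q = rho (p k i') q).

(* Elements: inl q for q in Q', inr (k, i) for p^(k)_(i+1), i : nat. *)
Definition prop_type (Q : finType) (n : nat) (p : 'I_n -> 'I_5 -> Q) : Type :=
  ({q : Q | ~~ in_seed p q} + ('I_n * nat))%type.

Definition s1 : 'I_5 := inord 0.
Definition s2 : 'I_5 := inord 1.
Definition s3 : 'I_5 := inord 2.

Definition prop_rel (Q : finType) (rho : rel Q) (n : nat) (p : 'I_n -> 'I_5 -> Q)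
    (x y : prop_type p) : Prop :=
  match x, y with
  | inl q, inl q' => rho (sval q) (sval q')
  | inr (k, i), inr (l, j) =>
      (j = i /\ rho (p k s1) (p l s1)) \/
      (j = i.+1 /\ rho (p k s1) (p l s2)) \/
      (i = j.+1 /\ rho (p k s2) (p l s1)) \/
      (i.+2 <= j /\ rho (p k s1) (p l s3)) \/
      (j.+2 <= i /\ rho (p k s3) (p l s1))
  | inl q, inr (k, i) =>
      if i == 0 then rho (sval q) (p k s1) else rho (sval q) (p k s2)
  | inr (k, i), inl q =>
      if i == 0 then rho (p k s1) (sval q) else rho (p k s2) (sval q)
  end.

From mathcomp Require Import all_boot zify.
From Stdlib Require Import ClassicalEpsilon.
Set Implicit Arguments. Unset Strict Implicit. Unset Printing Implicit Defensive.

(* Periodicity drives both directions. A DFA over {a} runs through a lasso,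
   and on conv(m, n) a DFA reads min(m, n) diagonal letters and then |m - n|
   letters of a single kind. Hence, beyond a threshold T, a regular relation
   is invariant under adding P = T! to both arguments, or to the larger one
   when they are at least T apart; conversely every such relation is accepted
   by an automaton that follows both counters around the lasso.
   Given a presentation, keep the least word of each class. Beyond B = 3P
   these least representatives form progressions B + r + iP, and periodicity
   makes the relation between two progressions depend only on whether the
   indices are equal, adjacent or far apart, and between a smaller element
   and a progression only on whether the index is 0. So the first five terms
   of each progression are seeds, the representatives below B form Q', and
   the propagation is isomorphic to the presented relation. Conversely, a
   propagation is presented by numbering Q' below #|Q| and p^(k)_(i+1) as
   #|Q| + i n + k, which makes equality and the relation periodic. *)

Lemma foldl_nseq (A S : Type) (f : S -> A -> S) s n c :
  foldl f s (nseq n c) = iter n (f^~ c) s.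
Proof. by elim: n s => [|n IH] s //=; rewrite IH -iterSr. Qed.

Lemma unit_seqE (w : seq unit) : w = nseq (size w) tt.
Proof. by elim: w => [|[] w IH] //=; rewrite -IH. Qed.

Definition some_val (A : Type) (o : option A) : o -> A :=
  if o is Some a return o -> A then fun=> a else fun h => False_rect A (notF h).

Lemma some_valE (A : Type) (o : option A) (h : o) a : o = Some a -> some_val h = a.
Proof. by case: o h => // b h [->]. Qed.

Lemma rel_iso_of_surj (X Y : Type) (rX : X -> X -> Prop) (rY : Y -> Y -> Prop)
    (g : Y -> X) :
  injective g -> (forall x, exists y, g y = x) ->
  (forall a b, rY a b <-> rX (g a) (g b)) -> rel_iso rX rY.
Proof.
move=> g_inj g_surj g_rel.
pose f x := sval (constructive_indefinite_description _ (g_surj x)).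
have fK : cancel f g.
  by move=> x; exact: svalP (constructive_indefinite_description _ (g_surj x)).
exists f; split; first by exists g => // a; apply: g_inj; rewrite fK.
by move=> x y; rewrite g_rel !fK.
Qed.

Lemma conv_nseq m n : conv m n =
  nseq (minn m n) (true, true) ++ nseq (n - m) (false, true) ++ nseq (m - n) (true, false).
Proof.
apply: (@eq_from_nth _ (true, true)) => [|i]; rewrite size_mkseq.
  by rewrite !size_cat !size_nseq; lia.
move=> lt_i; rewrite nth_mkseq // !nth_cat !size_nseq !nth_nseq.
by repeat case: ifP => ?; congr pair; apply/idP/idP; lia.
Qed.

Lemma conv_count m n :
  count fst (conv m n) = m /\ count snd (conv m n) = n.
Proof. by rewrite conv_nseq !count_cat !count_nseq /=; split; lia. Qed.

Lemma conv_inj m n m' n' : conv m n = conv m' n' -> m = m' /\ n = n'.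
Proof.
move=> e; have [? ?] := conv_count m n; have [? ?] := conv_count m' n'.
by split; congruence.
Qed.

Lemma daccept_conv (D : dfa (bool * bool)) m n :
  daccept D (conv m n) = dfinal
   (iter (m - n) (fun s => dtrans s (true, false))
     (iter (n - m) (fun s => dtrans s (false, true))
       (iter (minn m n) (fun s => dtrans s (true, true)) (dstart D)))).
Proof. by rewrite /daccept conv_nseq !foldl_cat !foldl_nseq. Qed.

Lemma regular_rel_conv (D : dfa (bool * bool)) (R : nat -> nat -> Prop) :
  (forall w, daccept D w <-> exists m n, w = conv m n /\ R m n) ->
  forall m n, daccept D (conv m n) <-> R m n.
Proof.
move=> hD m n; rewrite hD; split; last by exists m, n.
by case=> m' [n' [/conv_inj [-> ->]]].
Qed.

Lemma regular_rel_ext (R1 R2 : nat -> nat -> Prop) :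
  (forall m n, R1 m n <-> R2 m n) -> unary_regular_rel R1 -> unary_regular_rel R2.
Proof.
move=> h [D hD]; exists D => w; rewrite hD.
by split; case=> m [k [e r]]; exists m, k; split => //; apply/h.
Qed.

(** * Ultimately periodic relations *)

Definition periodic_from (A : Type) (T P : nat) (f : nat -> A) :=
  forall x, T <= x -> f (x + P) = f x.

Definition rel_periodic_from (T P : nat) (G : nat -> nat -> bool) :=
  [/\ forall x y, T <= x -> T <= y -> G (x + P) (y + P) = G x y,
      forall x y, x + T <= y -> G x (y + P) = G x y
    & forall x y, y + T <= x -> G (x + P) y = G x y].

Lemma periodic_from_mul (A : Type) T P (f : nat -> A) :
  periodic_from T P f -> forall q x, T <= x -> f (x + q * P) = f x.
Proof.
move=> hf; elim=> [|q IH] x hx; first by rewrite addn0.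
have -> : x + q.+1 * P = x + q * P + P by rewrite mulSn; lia.
by rewrite hf ?IH //; lia.
Qed.

Lemma rel_periodic_flip T P G :
  rel_periodic_from T P G -> rel_periodic_from T P (fun x y => G y x).
Proof. by case=> h1 h2 h3; split=> x y *; [apply: h1 | apply: h3 | apply: h2]. Qed.

Lemma iter_periodic_fact (S : finType) (g : S -> S) s M :
  #|S| <= M -> periodic_from M M`! (fun m => iter m g s).
Proof.
move=> leSM.
have [a [b [lt_ab le_bS eq_ab]]] :
    exists a b, [/\ a < b, b <= #|S| & iter a g s = iter b g s].
  pose f (i : 'I_#|S|.+1) := iter i g s.
  have /injectivePn [i [j neq_ij eq_ij]] : ~~ injectiveb f.
    by apply/injectiveP => /leq_card; rewrite card_ord ltnn.
  have [lt_ij|lt_ji|/val_inj eqij] := ltngtP i j; last by rewrite eqij eqxx in neq_ij.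
  - by exists i, j; split=> //; rewrite -ltnS.
  - by exists j, i; split=> //; rewrite -ltnS.
have per : periodic_from a (b - a) (fun m => iter m g s).
  move=> x le_ax /=; have -> : x + (b - a) = (x - a) + b by lia.
  by rewrite iterD -eq_ab -iterD subnK.
have /dvdnP [c ->] : (b - a) %| M`! by apply: dvdn_fact; lia.
by move=> x le_Mx; apply: (periodic_from_mul per); lia.
Qed.

Lemma dfa_conv_periodic (D : dfa (bool * bool)) M :
  #|dstate D| <= M -> rel_periodic_from M M`! (fun m n => daccept D (conv m n)).
Proof.
move=> le_DM; have per := iter_periodic_fact _ _ le_DM.
split=> x y hx *; rewrite !daccept_conv.
- have -> : minn (x + M`!) (y + M`!) = minn x y + M`! by lia.
  by rewrite per ?subnDr //; lia.
- have -> : x - (y + M`!) = x - y by lia.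
  have -> : y + M`! - x = y - x + M`! by lia.
  have -> : minn x (y + M`!) = minn x y by lia.
  by rewrite per //; lia.
- have -> : y - (x + M`!) = y - x by lia.
  have -> : x + M`! - y = x - y + M`! by lia.
  have -> : minn (x + M`!) y = minn x y by lia.
  by rewrite per //; lia.
Qed.

Section Lasso.
Variables (T P : nat).
Hypothesis P_gt0 : 0 < P.

(* The states of the automata below form a lasso: a tail [0, T) followed by
   a cycle [T, T + P). *)
Definition lasso x := if x < T then x else T + (x - T) %% P.
Definition lasso_next c := if c.+1 < T + P then c.+1 else T.

Lemma lasso_S x : lasso x.+1 = lasso_next (lasso x).
Proof.
rewrite /lasso /lasso_next; case: (ltnP x T) => hx.
  case: (ltnP x.+1 T) => hx'; first by rewrite ifT //; lia.
  have -> : x.+1 = T by lia.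
  by rewrite subnn mod0n addn0 ifT //; lia.
have lt_mod := ltn_pmod (x - T) P_gt0.
rewrite ifF; last lia.
have -> : x.+1 - T = (x - T) + 1 by lia.
rewrite -modnDml; case: (ltnP ((x - T) %% P).+1 P) => hP.
  by rewrite addn1 modn_small // ifT; lia.
have -> : (x - T) %% P + 1 = P by lia.
by rewrite modnn ifF; lia.
Qed.

Lemma lasso0 : lasso 0 = 0.
Proof. by rewrite /lasso; case: ifP => //; rewrite sub0n mod0n; lia. Qed.

Lemma periodic_lasso (A : Type) (f : nat -> A) :
  periodic_from T P f -> forall x, f x = f (lasso x).
Proof.
move=> hf x; rewrite /lasso; case: ltnP => // hx.
have {1}-> : x = T + (x - T) %% P + (x - T) %/ P * P by have := divn_eq (x - T) P; lia.
by rewrite (periodic_from_mul hf) //; lia.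
Qed.

Lemma rel_periodic_lasso G : rel_periodic_from T P G ->
  forall m d, G m (m + d) = G (lasso m) (lasso m + lasso d).
Proof.
case=> h1 h2 _ m d.
have per_m : periodic_from T P (fun x => G x (x + d)).
  by move=> x hx; rewrite addnAC h1 //; lia.
have per_d : periodic_from T P (fun y => G (lasso m) (lasso m + y)).
  by move=> y hy; rewrite addnA h2 //; lia.
have -> : G m (m + d) = G (lasso m) (lasso m + d) by exact: (periodic_lasso per_m).
exact: (periodic_lasso per_d).
Qed.

Definition lasso_ord (a : 'I_(T + P).+1) : 'I_(T + P).+1 := inord (lasso_next a).

Lemma val_iter_lasso_ord k : val (iter k lasso_ord ord0) = lasso k.
Proof.
elim: k => [|k IH] /=; first by rewrite lasso0.
rewrite inordK; first by rewrite IH lasso_S.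
by rewrite /lasso_next; case: ifP; lia.
Qed.

Lemma periodic_unary_regular (L : pred nat) : periodic_from T P L -> unary_regular L.
Proof.
move=> per; exists (DFA (ord0 : 'I_(T + P).+1) (fun a => L a) (fun a _ => lasso_ord a)).
by move=> w; rewrite /daccept /= {1}(unit_seqE w) foldl_nseq val_iter_lasso_ord -periodic_lasso.
Qed.

Variable G : nat -> nat -> bool.
Hypothesis G_per : rel_periodic_from T P G.

Local Notation K := (T + P).
Local Notation tt2 := (true, true).

(* After reading conv m n, the state (t, a, b) holds the last letter t, the
   lasso position a of minn m n, and the lasso position b of |m - n|. *)
Definition conv_step (s : option (bool * bool * 'I_K.+1 * 'I_K.+1)) c :=
  if s is Some (t, a, b) then
    if (t == tt2) && (c == tt2) then Some (t, lasso_ord a, b)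
    else if [&& c != tt2, c != (false, false) & (t == tt2) || (t == c)]
      then Some (c, a, lasso_ord b)
    else None
  else None.

Definition conv_final (s : option (bool * bool * 'I_K.+1 * 'I_K.+1)) :=
  if s is Some (t, a, b) then
    if t == (true, false) then G (a + b) a else G a (a + b)
  else false.

Lemma conv_finalE t a b : conv_final (Some (t, a, b)) =
  if t == (true, false) then G (a + b) a else G a (a + b).
Proof. by []. Qed.

Definition conv_start := Some (tt2, ord0 : 'I_K.+1, ord0 : 'I_K.+1).

Lemma iter_conv_step_diag k a b :
  iter k (conv_step^~ tt2) (Some (tt2, a, b)) = Some (tt2, iter k lasso_ord a, b).
Proof. by elim: k => //= k ->. Qed.

Lemma conv_step_tail c t a b :
  c != tt2 -> c != (false, false) -> (t == tt2) || (t == c) ->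
  conv_step (Some (t, a, b)) c = Some (c, a, lasso_ord b).
Proof. by case: c t => [[] []] [[] []]. Qed.

Lemma iter_conv_step_tail k c t a b :
  c != tt2 -> c != (false, false) -> (t == tt2) || (t == c) ->
  iter k.+1 (conv_step^~ c) (Some (t, a, b)) = Some (c, a, iter k.+1 lasso_ord b).
Proof.
move=> hc1 hc2 ht; elim: k => [|k IH]; first exact: conv_step_tail.
by rewrite iterS IH conv_step_tail ?eqxx ?orbT.
Qed.

Lemma conv_final_run m n : conv_final (foldl conv_step conv_start (conv m n)) = G m n.
Proof.
rewrite conv_nseq !foldl_cat !foldl_nseq iter_conv_step_diag.
have [le_mn|lt_nm] := leqP m n.
- rewrite (_ : m - n = 0) /=; last lia.
  case hd: (n - m) => [|d].
    rewrite /= val_iter_lasso_ord (_ : n = m + 0); last lia.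
    by rewrite (rel_periodic_lasso G_per m 0) lasso0.
  rewrite iter_conv_step_tail // conv_finalE !val_iter_lasso_ord /= -(rel_periodic_lasso G_per).
  by rewrite (_ : n = m + d.+1); last lia.
- rewrite (_ : n - m = 0) /=; last lia.
  case hd: (m - n) => [|d]; first lia.
  rewrite iter_conv_step_tail // conv_finalE !val_iter_lasso_ord /=.
  rewrite -(rel_periodic_lasso (rel_periodic_flip G_per)) /=.
  by rewrite (_ : m = n + d.+1); last lia.
Qed.

Lemma conv_run_shape w t a b : foldl conv_step conv_start w = Some (t, a, b) ->
  [/\ t != (false, false) & exists k j, w = nseq k tt2 ++ nseq j t].
Proof.
elim/last_ind: w t a b => [|w c IH] t a b; first by case=> <- _ _; split=> //; exists 0, 0.
rewrite foldl_rcons; case run_w: foldl => [[[t' a'] b']|] //=.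
have [nff_t' [k [j ->]]] := IH _ _ _ run_w.
case: ifP => [/andP[/eqP -> /eqP ->] [<- _ _]|_].
  by split=> //; exists k, j.+1; rewrite rcons_cat -cats1 -addn1 nseqD.
case: ifP => // /and3P[_ nff_c /orP[/eqP et'|/eqP et']] [<- _ _]; split=> //.
- by exists (k + j), 1; rewrite et' nseqD -cats1.
- by exists k, j.+1; rewrite et' rcons_cat -cats1 -addn1 nseqD.
Qed.

Lemma conv_run_conv w :
  conv_final (foldl conv_step conv_start w) -> exists m n, w = conv m n.
Proof.
case run_w: foldl => [[[t a] b]|] // _; have [] := conv_run_shape run_w.
case: t {run_w} => [[] []] // _ [k [j ->]].
- by exists (k + j), (k + j); rewrite conv_nseq minnn subnn /= cats0 nseqD.
- exists (k + j), k; rewrite conv_nseq (_ : minn _ _ = k); last lia.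
  by rewrite addKn (_ : k - _ = 0) //; lia.
- exists k, (k + j); rewrite conv_nseq (_ : minn _ _ = k); last lia.
  by rewrite addKn (_ : k - _ = 0) ?cats0 //; lia.
Qed.

Lemma rel_periodic_regular : unary_regular_rel G.
Proof.
exists (DFA conv_start conv_final conv_step) => w; split.
  by move=> acc; have [m [n ew]] := conv_run_conv acc; exists m, n; rewrite -conv_final_run -ew.
by case=> m [n [-> Gmn]]; rewrite /daccept /= conv_final_run.
Qed.

End Lasso.

(** * The propagated relation *)

Definition chain_pattern (a00 a01 a10 a02 a20 : bool) (i j : nat) :=
  if j == i then a00 else if j == i.+1 then a01 else if i == j.+1 then a10
  else if i < j then a02 else a20.

Section ChainPattern.
Variables a00 a01 a10 a02 a20 : bool.
Local Notation pat := (chain_pattern a00 a01 a10 a02 a20).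

Lemma chain_pattern_eq i j : j == i -> pat i j = a00.
Proof. by rewrite /chain_pattern => ->. Qed.

Lemma chain_pattern_succ i j : j == i.+1 -> pat i j = a01.
Proof. by rewrite /chain_pattern; repeat case: ifP; lia. Qed.

Lemma chain_pattern_pred i j : i == j.+1 -> pat i j = a10.
Proof. by rewrite /chain_pattern; repeat case: ifP; lia. Qed.

Lemma chain_pattern_right i j : i.+2 <= j -> pat i j = a02.
Proof. by rewrite /chain_pattern; repeat case: ifP; lia. Qed.

Lemma chain_pattern_left i j : j.+2 <= i -> pat i j = a20.
Proof. by rewrite /chain_pattern; repeat case: ifP; lia. Qed.

Lemma chain_patternP i j :
  reflect ((j = i /\ a00) \/ (j = i.+1 /\ a01) \/ (i = j.+1 /\ a10) \/
           (i.+2 <= j /\ a02) \/ (j.+2 <= i /\ a20)) (pat i j).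
Proof.
rewrite /chain_pattern; apply: (iffP idP).
  case: eqP => [-> ?|?]; first by left.
  case: eqP => [-> ?|?]; first by right; left.
  case: eqP => [-> ?|?]; first by do 2 right; left.
  by case: ifP => ? ?; [do 3 right; left | do 4 right]; split=> //; lia.
by case=> [[? ?]|[[? ?]|[[? ?]|[[? ?]|[? ?]]]]]; repeat case: ifP => ? //; lia.
Qed.

End ChainPattern.

Lemma chain_pattern_flip a00 a01 a10 a02 a20 i j :
  chain_pattern a00 a01 a10 a02 a20 i j = chain_pattern a00 a10 a01 a20 a02 j i.
Proof. by rewrite /chain_pattern; repeat case: ifP => ? //; lia. Qed.

Lemma s1E : s1 = 0 :> nat. Proof. by rewrite inordK. Qed.
Lemma s2E : s2 = 1 :> nat. Proof. by rewrite inordK. Qed.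
Lemma s3E : s3 = 2 :> nat. Proof. by rewrite inordK. Qed.

Definition prop_relb (Q : finType) (rho : rel Q) (n : nat) (p : 'I_n -> 'I_5 -> Q)
    (x y : prop_type p) : bool :=
  match x, y with
  | inl q, inl q' => rho (sval q) (sval q')
  | inr (k, i), inr (l, j) =>
      chain_pattern (rho (p k s1) (p l s1)) (rho (p k s1) (p l s2))
        (rho (p k s2) (p l s1)) (rho (p k s1) (p l s3)) (rho (p k s3) (p l s1)) i j
  | inl q, inr (k, i) => if i == 0 then rho (sval q) (p k s1) else rho (sval q) (p k s2)
  | inr (k, i), inl q => if i == 0 then rho (p k s1) (sval q) else rho (p k s2) (sval q)
  end.

Lemma prop_relP (Q : finType) (rho : rel Q) n (p : 'I_n -> 'I_5 -> Q) x y :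
  prop_rel rho x y <-> @prop_relb Q rho n p x y.
Proof. by case: x => [q|[k i]]; case: y => [q'|[l j]] //=; apply: rwP; apply: chain_patternP. Qed.

(** * From a presentation to a propagation *)

Section Presentation.
Variables (X : Type) (rho : X -> X -> Prop) (L : pred nat) (phi : {m : nat | L m} -> X).
Variables (T P : nat) (E R : nat -> nat -> bool).
Hypotheses (P_gt0 : 0 < P) (le_TP : T <= P).
Hypotheses (E_per : rel_periodic_from T P E) (R_per : rel_periodic_from T P R).
Hypothesis E_spec : forall m n,
  E m n <-> exists (hm : L m) (hn : L n), phi (exist _ m hm) = phi (exist _ n hn).
Hypothesis R_spec : forall m n,
  R m n <-> exists (hm : L m) (hn : L n), rho (phi (exist _ m hm)) (phi (exist _ n hn)).
Hypothesis phi_surj : forall x, exists u, phi u = x.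

Lemma phi_irr m (hm hm' : L m) : phi (exist _ m hm) = phi (exist _ m hm').
Proof. by rewrite (bool_irrelevance hm hm'). Qed.

Lemma E_phi m n hm hn : E m n <-> phi (exist _ m hm) = phi (exist _ n hn).
Proof.
split; last by move=> e; apply/E_spec; exists hm, hn.
by case/E_spec => hm' [hn' e]; rewrite (phi_irr hm hm') (phi_irr hn hn').
Qed.

Lemma R_phi m n hm hn : R m n <-> rho (phi (exist _ m hm)) (phi (exist _ n hn)).
Proof.
split; last by move=> r; apply/R_spec; exists hm, hn.
by case/R_spec => hm' [hn' r]; rewrite (phi_irr hm hm') (phi_irr hn hn').
Qed.

Lemma E_L m n : E m n -> L m /\ L n.
Proof. by case/E_spec => hm [hn _]. Qed.

Lemma E_refl m : E m m = L m.
Proof. by apply/idP/idP => [/E_L[]//|hm]; apply/(E_phi hm hm). Qed.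

Lemma E_sym m n : E m n -> E n m.
Proof. by case/E_spec => hm [hn e]; apply/E_spec; exists hn, hm. Qed.

Lemma E_trans m n o : E m n -> E n o -> E m o.
Proof.
case/E_spec => hm [hn e1] /E_spec [hn' [ho e2]]; apply/E_spec; exists hm, ho.
by rewrite e1 -e2 (phi_irr hn hn').
Qed.

Definition least_rep m := L m && [forall i : 'I_m, ~~ E i m].

Lemma least_repP m :
  reflect (L m /\ forall i, i < m -> ~~ E i m) (least_rep m).
Proof.
apply: (iffP andP) => -[hm h]; split=> //; first by move=> i lt_im; exact: (forallP h (Ordinal lt_im)).
by apply/forallP => i; apply: h.
Qed.

Lemma least_rep_uniq m n : least_rep m -> least_rep n -> E m n -> m = n.
Proof.
move=> /least_repP[_ rm] /least_repP[_ rn] e.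
have [lt_mn|lt_nm|//] := ltngtP m n.
- by have := rn m lt_mn; rewrite e.
- by have := rm n lt_nm; rewrite E_sym.
Qed.

Local Notation B := (3 * P).

(* A smaller E-equivalent i of y either stays a smaller E-equivalent of
   y + P (when i + T < y) or moves to i + P; B = 3P leaves room for the
   converse move from i to i - P. *)
Lemma least_rep_periodic : periodic_from B P least_rep.
Proof.
case: E_per => h1 h2 _ y hy.
have L_per : L (y + P) = L y by rewrite -!E_refl h1 //; lia.
apply/least_repP/least_repP => -[hL h]; split; try by move: hL; rewrite L_per.
all: move=> i lt_iy; apply/negP => e.
- have [lt_iTy|le_yiT] := ltnP (i + T) y.
    by have := h i; rewrite h2 ?e //; lia.
  by have := h (i + P); rewrite ltn_add2r h1 ?e //; lia.
- have [lt_iTy|le_yiT] := ltnP (i + T) y.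
    by have := h i; rewrite -h2 ?e //; lia.
  by have := h (i - P); rewrite -h1 ?subnK ?e //; lia.
Qed.

Definition residues := [seq r <- iota 0 P | least_rep (B + r)].
Definition nchains := size residues.
Definition chain (k : 'I_nchains) i := B + nth 0 residues k + i * P.

Lemma residues_uniq : uniq residues.
Proof. by rewrite filter_uniq // iota_uniq. Qed.

Lemma mem_residues r : (r \in residues) = (r < P) && least_rep (B + r).
Proof. by rewrite mem_filter mem_iota andbC. Qed.

Lemma nth_residues (k : 'I_nchains) :
  nth 0 residues k < P /\ least_rep (B + nth 0 residues k).
Proof. by have := mem_nth 0 (ltn_ord k); rewrite mem_residues => /andP. Qed.

Lemma least_rep_chain k i : least_rep (chain k i).
Proof. by rewrite /chain (periodic_from_mul least_rep_periodic) ?(nth_residues k).2 //; lia. Qed.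

Lemma chain_S k i : chain k i.+1 = chain k i + P.
Proof. by rewrite /chain mulSn; lia. Qed.

Lemma chain_ge k i : B <= chain k i.
Proof. by rewrite /chain; lia. Qed.

Lemma chain_inj k l i j : chain k i = chain l j -> k = l /\ i = j.
Proof.
rewrite /chain => e; have [lt_kP _] := nth_residues k; have [lt_lP _] := nth_residues l.
have {}e : nth 0 residues k + i * P = nth 0 residues l + j * P by lia.
have e_res : nth 0 residues k = nth 0 residues l.
  have := congr1 (modn^~ P) e; rewrite /=.
  by rewrite ![nth 0 residues _ + _]addnC !modnMDl !modn_small.
split; first by apply/val_inj/eqP; rewrite -(nth_uniq 0 (ltn_ord k) (ltn_ord l) residues_uniq) e_res.
by apply/eqP; rewrite -(eqn_pmul2r P_gt0); apply/eqP; move: e; rewrite e_res; lia.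
Qed.

Lemma chain_surj v : B <= v -> least_rep v -> exists k i, chain k i = v.
Proof.
move=> le_Bv rep_v; set r := (v - B) %% P; set i := (v - B) %/ P.
have v_eq : v = B + r + i * P by have := divn_eq (v - B) P; lia.
have r_in : r \in residues.
  rewrite mem_residues ltn_pmod //= -(periodic_from_mul least_rep_periodic i) -?v_eq //.
  by lia.
have idx_r : index r residues < nchains by rewrite index_mem.
exists (Ordinal idx_r), i.
by rewrite /chain nth_index.
Qed.

Section ChainRel.
Variable G : nat -> nat -> bool.
Hypothesis G_per : rel_periodic_from T P G.

Local Notation chain_pattern_at k l :=
  (chain_pattern (G (chain k 0) (chain l 0)) (G (chain k 0) (chain l 1))
     (G (chain k 1) (chain l 0)) (G (chain k 0) (chain l 2)) (G (chain k 2) (chain l 0))).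

Lemma chain_shift k l i j x : G (chain k (i + x)) (chain l (j + x)) = G (chain k i) (chain l j).
Proof.
case: G_per => h1 _ _; elim: x => [|x IH]; first by rewrite !addn0.
by rewrite !addnS !chain_S h1 // (leq_trans _ (chain_ge _ _)) //; lia.
Qed.

Lemma chain_far k l d : G (chain k 0) (chain l (d + 2)) = G (chain k 0) (chain l 2).
Proof.
case: G_per => _ h2 _; elim: d => [|d IH] //.
rewrite addSn chain_S h2 //.
by have := (nth_residues k).1; have := chain_ge l d; rewrite addn2 !chain_S /chain; lia.
Qed.

Lemma chain_rel_le k l i j : i <= j -> G (chain k i) (chain l j) = chain_pattern_at k l i j.
Proof.
move=> le_ij; rewrite -(subnK le_ij) -{1}[i]add0n chain_shift.
case: (j - i) => [|[|d]].
- by rewrite chain_pattern_eq.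
- by rewrite chain_pattern_succ.
- by rewrite chain_pattern_right; [rewrite -(chain_far k l d) addn2 | lia].
Qed.

End ChainRel.

Lemma chain_rel G : rel_periodic_from T P G -> forall k l i j,
  G (chain k i) (chain l j) =
  chain_pattern (G (chain k 0) (chain l 0)) (G (chain k 0) (chain l 1))
    (G (chain k 1) (chain l 0)) (G (chain k 0) (chain l 2)) (G (chain k 2) (chain l 0)) i j.
Proof.
move=> G_per k l i j; have [le_ij|lt_ji] := leqP i j; first exact: chain_rel_le.
by rewrite chain_pattern_flip (chain_rel_le (rel_periodic_flip G_per) l k (ltnW lt_ji)).
Qed.

Lemma small_chain_rel G : rel_periodic_from T P G ->
  forall v k i, v < B -> 0 < i -> G v (chain k i) = G v (chain k 1).
Proof.
case=> _ h2 _ v k; elim=> // -[|i] IH lt_vB _ //.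
have le_Bc := chain_ge k i.
by rewrite chain_S h2 ?IH // chain_S; lia.
Qed.

Local Notation N := (B + 5 * P).

Lemma chain_lt k (i : 'I_5) : chain k i < N.
Proof.
have le_iP : i * P <= 4 * P by rewrite leq_mul2r -ltnS ltn_ord orbT.
by have := (nth_residues k).1; rewrite /chain; lia.
Qed.

(* Q consists of the least representatives below B + 5P: those below B form
   Q', and the first five terms of each chain form a seed. *)
Definition rep_type : finType := {m : 'I_N | least_rep m}.
Definition rep_val (q : rep_type) : nat := val (sval q).
Definition rep_rel : rel rep_type := fun a b => R (rep_val a) (rep_val b).
Definition seed k (i : 'I_5) : rep_type :=
  exist _ (Ordinal (chain_lt k i)) (least_rep_chain k i).

Lemma rep_val_seed k i : rep_val (seed k i) = chain k i.
Proof. by []. Qed.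

Lemma rep_val_inj : injective rep_val.
Proof. by move=> a b e; apply/val_inj/val_inj. Qed.

Lemma in_seedE q : in_seed seed q = (B <= rep_val q).
Proof.
apply/existsP/idP => [[k /existsP[i /eqP <-]]|le_Bq]; first exact: chain_ge.
have [k [i e]] := chain_surj le_Bq (valP q).
have lt_i5 : i < 5.
  rewrite ltnNge; apply/negP => le_5i; have := ltn_ord (sval q).
  have : 5 * P <= i * P by rewrite leq_mul2r le_5i orbT.
  by rewrite -/(rep_val q) -e /chain; lia.
by exists k; apply/existsP; exists (Ordinal lt_i5); apply/eqP/rep_val_inj.
Qed.

Lemma seed_foundational : FA_foundational rep_rel seed.
Proof.
have chain_relR := chain_rel R_per.
split; [|split; [|split; [|split; [|split; [|split]]]]].
- by move=> k l i j /(congr1 rep_val)/chain_inj[-> /val_inj].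
1-5: move=> k l i j i' j' c c'; rewrite /rep_rel /= (chain_relR k l i j) (chain_relR k l i' j').
- by rewrite !chain_pattern_eq.
- by rewrite !chain_pattern_succ.
- by rewrite !chain_pattern_pred.
- by rewrite !chain_pattern_right.
- by rewrite !chain_pattern_left.
move=> k q i i'; rewrite in_seedE -ltnNge /rep_rel /= => lt_qB i_gt0 i'_gt0.
have small := small_chain_rel R_per; have small' := small_chain_rel (rel_periodic_flip R_per).
by rewrite /= in small'; rewrite !small // !small'.
Qed.

Definition rep_of (a : prop_type seed) : nat :=
  match a with inl q => rep_val (sval q) | inr (k, i) => chain k i end.

Lemma least_rep_of a : least_rep (rep_of a).
Proof. by case: a => [q|[k i]]; [exact: valP (sval q) | exact: least_rep_chain]. Qed.

Lemma L_rep_of a : L (rep_of a).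
Proof. by have /andP[] := least_rep_of a. Qed.

Lemma rep_val_free (q : {q : rep_type | ~~ in_seed seed q}) : rep_val (sval q) < B.
Proof. by have := valP q; rewrite in_seedE -ltnNge. Qed.

Lemma rep_of_inj : injective rep_of.
Proof.
case=> [q|[k i]] [q'|[l j]] /= e.
- by congr inl; apply/val_inj/rep_val_inj.
- by have := rep_val_free q; rewrite e; have := chain_ge l j; lia.
- by have := rep_val_free q'; rewrite -e; have := chain_ge k i; lia.
- by have [-> ->] := chain_inj e.
Qed.

Lemma rep_of_surj r : least_rep r -> exists a, rep_of a = r.
Proof.
move=> rep_r; have [lt_rB|le_Br] := ltnP r B; last first.
  by have [k [i <-]] := chain_surj le_Br rep_r; exists (inr (k, i)).
have lt_rN : r < N by lia.
pose q : rep_type := exist _ (Ordinal lt_rN) rep_r.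
have q_free : ~~ in_seed seed q by rewrite in_seedE -ltnNge.
by exists (inl (exist _ q q_free)).
Qed.

Lemma prop_relb_rep_of a b : prop_relb rep_rel a b = R (rep_of a) (rep_of b).
Proof.
have small := small_chain_rel R_per; have small' := small_chain_rel (rel_periodic_flip R_per).
case: a => [q|[k i]]; case: b => [q'|[l j]] //=; rewrite /rep_rel !rep_val_seed ?s1E ?s2E ?s3E.
- by case: (posnP j) => [->|j_gt0] //; rewrite small // rep_val_free.
- by case: (posnP i) => [->|i_gt0] //; rewrite /= in small'; rewrite small' // rep_val_free.
- by rewrite (chain_rel R_per k l i j).
Qed.

Definition point a := phi (exist _ (rep_of a) (L_rep_of a)).

Lemma point_inj : injective point.
Proof.
move=> a b e; apply/rep_of_inj/least_rep_uniq; rewrite ?least_rep_of //.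
exact/(E_phi (L_rep_of a) (L_rep_of b)).
Qed.

Lemma point_surj x : exists a, point a = x.
Proof.
have [[m hm] <-] := phi_surj x.
have ex_E : exists r, E r m by exists m; rewrite E_refl.
have [r E_rm r_min] := ex_minnP ex_E.
have [hr _] := E_L E_rm.
have [a ea] : exists a, rep_of a = r.
  apply: rep_of_surj; apply/least_repP; split=> // i lt_ir; apply/negP => E_ir.
  by have := r_min i (E_trans E_ir E_rm); lia.
exists a; rewrite /point; move: (L_rep_of a); rewrite ea => hr'.
by apply/(E_phi hr' hm).
Qed.

Lemma presentation_propagation :
  exists (Q : finType) (rhoQ : rel Q) (n : nat) (p : 'I_n -> 'I_5 -> Q),
    FA_foundational rhoQ p /\ rel_iso rho (@prop_rel Q rhoQ n p).
Proof.
exists rep_type, rep_rel, nchains, seed; split; first exact: seed_foundational.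
apply: (rel_iso_of_surj point_inj point_surj) => a b.
by rewrite prop_relP prop_relb_rep_of; apply: R_phi.
Qed.

End Presentation.

(** * From a propagation to a presentation *)

Section Propagation.
Variables (Q : finType) (rhoQ : rel Q) (n : nat) (p : 'I_n -> 'I_5 -> Q).
Local Notation Y := (prop_type p).

Definition offset := #|Q|.

Definition encode (y : Y) : nat :=
  match y with inl q => enum_rank (sval q) | inr (k, i) => offset + i * n + k end.

Definition decode (m : nat) : option Y :=
  if m < offset then
    obind (fun o : 'I_offset => omap inl (insub (enum_val o) : option {q : Q | ~~ in_seed p q}))
      (insub m)
  else omap (fun k => inr (k, (m - offset) %/ n)) (insub ((m - offset) %% n) : option 'I_n).

Lemma encodeK : pcancel encode decode.
Proof.
case=> [q|[k i]]; rewrite /decode /=.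
  by rewrite ifT ?ltn_ord // valK /= enum_rankK valK.
have lt_kn := ltn_ord k; rewrite ifF; last lia.
rewrite (_ : offset + i * n + k - offset = i * n + k); last lia.
by rewrite modnMDl modn_small // divnMDl ?divn_small ?addn0 ?valK //; lia.
Qed.

Lemma decodeK : ocancel decode encode.
Proof.
move=> m; rewrite /decode; case: ltnP => [lt_mN|le_Nm].
  case: insubP => [o _ <-|] //=; case: insubP => [q _ e|] //=.
  by rewrite e enum_valK.
case: insubP => [k _ ek|] //=; rewrite ek.
by have := divn_eq (m - offset) n; have := ltn_ord k; lia.
Qed.

Lemma decode_inj m m' y : decode m = Some y -> decode m' = Some y -> m = m'.
Proof. by move=> dm dm'; rewrite -(decodeK m) -(decodeK m') dm dm'. Qed.

Lemma decode_seed m : offset <= m -> 0 < n -> exists k i, m = encode (inr (k, i)).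
Proof.
move=> le_Nm n_gt0; exists (Ordinal (ltn_pmod (m - offset) n_gt0)), ((m - offset) %/ n) => /=.
by have := divn_eq (m - offset) n; lia.
Qed.

Lemma decode_no_seeds m : offset <= m -> n = 0 -> decode m = None.
Proof.
move=> le_Nm n0; rewrite /decode ifF; last lia.
by case: insubP => // k; exfalso; have := ltn_ord k; lia.
Qed.

Definition is_code m : bool := decode m.

Definition period := maxn n 1.
Definition threshold := offset + 3 * period.

Lemma period_gt0 : 0 < period.
Proof. by rewrite /period; lia. Qed.

Lemma is_code_seed m : offset <= m -> is_code m = (0 < n).
Proof.
move=> le_Nm; have [n0|n_gt0] := posnP n; first by rewrite /is_code decode_no_seeds.
by have [k [i ->]] := decode_seed le_Nm n_gt0; rewrite /is_code encodeK.
Qed.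

Lemma is_code_periodic : periodic_from threshold period is_code.
Proof. by move=> x hx; rewrite !is_code_seed //; rewrite /threshold in hx; lia. Qed.

Definition code_eq m m' := (m == m') && is_code m.

Lemma code_eq_periodic : rel_periodic_from threshold period code_eq.
Proof.
have := period_gt0; rewrite /code_eq /threshold => per_gt0.
split=> x y le_x; last 2 first.
- by rewrite !(introF eqP) //; lia.
- by rewrite !(introF eqP) //; lia.
by move=> le_y; rewrite eqn_add2r is_code_periodic.
Qed.

Definition code_rel m m' :=
  if (decode m, decode m') is (Some y, Some y') then prop_relb rhoQ y y' else false.

Lemma code_rel_encode y y' : code_rel (encode y) (encode y') = prop_relb rhoQ y y'.
Proof. by rewrite /code_rel !encodeK. Qed.

Lemma code_rel_decode m m' :
  code_rel m m' <-> exists y y', [/\ decode m = Some y, decode m' = Some y' & prop_relb rhoQ y y'].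
Proof.
rewrite /code_rel; split; last by case=> y [y' [-> -> r]].
by case: (decode m) => // y; case: (decode m') => // y' r; exists y, y'.
Qed.

Lemma encode_S k i : encode (inr (k, i.+1)) = encode (inr (k, i)) + n.
Proof. by rewrite /= mulSn; lia. Qed.

Lemma encode_far x k i : 0 < n -> x + threshold <= encode (inr (k, i)) ->
  0 < i /\ forall l j, x = encode (inr (l, j)) -> j.+2 <= i.
Proof.
move=> n_gt0; rewrite /threshold /period /= => le_x; have lt_kn := ltn_ord k.
split; first by case: i le_x => //; lia.
move=> l j ex; have lt_ln := ltn_ord l; rewrite ex /= in le_x.
have : j.+3 * n <= i.+1 * n by rewrite !mulSn; lia.
by rewrite leq_mul2r; case/orP; lia.
Qed.

Lemma code_rel_periodic : rel_periodic_from threshold period code_rel.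
Proof.
have [n0|n_gt0] := posnP n.
  have none m : threshold <= m -> decode m = None.
    by move=> le_m; apply: decode_no_seeds => //; rewrite /threshold in le_m; lia.
  split=> x y le_x; rewrite /code_rel.
  - by move=> le_y; rewrite (none x) ?(none (x + _)) //; lia.
  - by case: (decode x) => // a; rewrite (none y) ?(none (y + _)) //; lia.
  - by rewrite (none x) ?(none (x + _)) //; lia.
have period_n : period = n by rewrite /period; lia.
have seed_of m : threshold <= m -> exists k i, m = encode (inr (k, i)).
  by move=> le_m; apply: decode_seed => //; rewrite /threshold in le_m; lia.
rewrite period_n; split=> x y le_x.
- move=> le_y; have [k [i ->]] := seed_of x le_x; have [l [j ->]] := seed_of y le_y.
  by rewrite -!encode_S !code_rel_encode.
- have [l [j ey]] := seed_of y (leq_trans (leq_addl _ _) le_x); subst y.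
  have [j_gt0 far] := encode_far n_gt0 le_x.
  rewrite -encode_S; case dx: (decode x) => [a|]; last by rewrite /code_rel dx.
  have ex : x = encode a by rewrite -(decodeK x) dx.
  rewrite ex !code_rel_encode; case: a {dx} ex => [q|[k i]] ex /=.
    by case: j j_gt0 {le_x far}.
  by have far_ij := far _ _ ex; rewrite !chain_pattern_right // leqW.
- have [k [i ex]] := seed_of x (leq_trans (leq_addl _ _) le_x); subst x.
  have [i_gt0 far] := encode_far n_gt0 le_x.
  rewrite -encode_S; case dy: (decode y) => [a|]; last by rewrite /code_rel dy !encodeK.
  have ey : y = encode a by rewrite -(decodeK y) dy.
  rewrite ey !code_rel_encode; case: a {dy} ey => [q|[l j]] ey /=.
    by case: i i_gt0 {le_x far}.
  by have far_ji := far _ _ ey; rewrite !chain_pattern_left // leqW.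
Qed.

Variables (X : Type) (rho : X -> X -> Prop) (f : X -> Y) (g : Y -> X).
Hypotheses (fK : cancel f g) (gK : cancel g f).
Hypothesis f_rel : forall x y, rho x y <-> prop_rel rhoQ (f x) (f y).

Lemma is_code_decode m : is_code m -> exists y, decode m = Some y.
Proof. by rewrite /is_code; case: (decode m) => // y; exists y. Qed.

Definition decode_point (u : {m | is_code m}) : X := g (some_val (valP u)).

Lemma decode_pointE m (hm : is_code m) y :
  decode m = Some y -> decode_point (exist _ m hm) = g y.
Proof. by move=> dm; apply: (congr1 g (some_valE _ dm)). Qed.

Lemma decode_point_rel (S : X -> X -> Prop) m m' :
  (exists hm hm', S (decode_point (exist _ m hm)) (decode_point (exist _ m' hm'))) <->
  exists y y', [/\ decode m = Some y, decode m' = Some y' & S (g y) (g y')].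
Proof.
split => [[hm [hm']]|[y [y' [dm dm' s]]]].
  have [y dm] := is_code_decode hm; have [y' dm'] := is_code_decode hm'.
  by rewrite (decode_pointE _ dm) (decode_pointE _ dm') => s; exists y, y'.
have hm : is_code m by rewrite /is_code dm.
have hm' : is_code m' by rewrite /is_code dm'.
by exists hm, hm'; rewrite (decode_pointE _ dm) (decode_pointE _ dm').
Qed.

Lemma propagation_presentation : unary_FA_presentable rho.
Proof.
exists is_code, decode_point; split; [|split; [|split]].
- exact: (periodic_unary_regular period_gt0 is_code_periodic).
- move=> x; have hx : is_code (encode (f x)) by rewrite /is_code encodeK.
  by exists (exist _ (encode (f x)) hx); rewrite (decode_pointE _ (encodeK (f x))) fK.
- apply: (regular_rel_ext _ (rel_periodic_regular period_gt0 code_eq_periodic)) => m m'.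
  rewrite decode_point_rel /code_eq; split.
    by case/andP=> /eqP <-; rewrite /is_code; case dm: decode => [y|] // _; exists y, y.
  case=> y [y' [dm dm' /(can_inj gK) eyy']]; subst y'.
  by rewrite (decode_inj dm dm') eqxx /is_code dm'.
- apply: (regular_rel_ext _ (rel_periodic_regular period_gt0 code_rel_periodic)) => m m'.
  rewrite decode_point_rel code_rel_decode.
  by split; case=> y [y' [dm dm' r]]; exists y, y'; split=> //; move: r; rewrite f_rel !gK prop_relP.
Qed.

End Propagation.

Theorem theorem5p1 (X : Type) (rho : X -> X -> Prop) :
  unary_FA_presentable rho <->
  exists (Q : finType) (rhoQ : rel Q) (n : nat) (p : 'I_n -> 'I_5 -> Q),
    FA_foundational rhoQ p /\ rel_iso rho (@prop_rel Q rhoQ n p).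
Proof.
split.
- case=> L [phi [_ [phi_surj [[DE E_dfa] [DR R_dfa]]]]].
  pose M := #|dstate DE| + #|dstate DR|.
  apply: (@presentation_propagation X rho L phi M M`!
            (fun m n => daccept DE (conv m n)) (fun m n => daccept DR (conv m n))).
  + exact: fact_gt0.
  + exact: fact_geq.
  + by apply: dfa_conv_periodic; rewrite /M leq_addr.
  + by apply: dfa_conv_periodic; rewrite /M leq_addl.
  + exact: regular_rel_conv E_dfa.
  + exact: regular_rel_conv R_dfa.
  + exact: phi_surj.
(* The foundational conditions only ensure that the propagation extends the
   seed relation; every propagation is presentable. *)
- case=> Q [rhoQ [n [p [_ [f [[g fK gK] f_rel]]]]]].
  exact: propagation_presentation fK gK f_rel.
Qed.
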